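(* Let $G$ be a graph and let $v\in V(G)$. Then $v$ is Z-irrelevant (i.e., $v$ is not contained in any minimal zero forcing set of $G$) if and only if $v$ is not contained in any minimal fort of $G$.
   Context: Graphs are simple, finite, undirected, with nonempty vertex set; $N(v)$ denotes the open neighborhood of $v$. Zero forcing: starting from an initial set $B$ of blue vertices (all others white), repeatedly apply the color change rule: a blue vertex $u$ changes a white vertex $w$ to blue if $w$ is the only white neighbor of $u$. $B$ is a zero forcing set if eventually all vertices become blue. A minimal zero forcing set is a zero forcing set no proper subset of which is a zero forcing set. A nonempty set $F\subseteq V(G)$ is a fort if for every $v\in V(G)\setminus F$, $|N(v)\cap F|\neq 1$. A minimal fort is a fort that properly contains no other fort. *)

From mathcomp Require Import all_boot.
Set Implicit Arguments. Unset Strict Implicit. Unset Printing Implicit Defensive.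

Definition simple_graph (T : finType) (e : rel T) : Prop :=
  symmetric e /\ irreflexive e.

Definition nbhd (T : finType) (e : rel T) (v : T) : {set T} := [set w | e v w].

(* One application of the color change rule: blue u forces white w when w is
   the only white neighbour of u. *)
Definition forces (T : finType) (e : rel T) (S : {set T}) (u w : T) : bool :=
  [&& u \in S, w \notin S & nbhd e u :\: S == [set w]].

Inductive zf_reach (T : finType) (e : rel T) (B : {set T}) : {set T} -> Prop :=
| zf_start : zf_reach e B B
| zf_step S u w : zf_reach e B S -> forces e S u w -> zf_reach e B (w |: S).

Definition zero_forcing_set (T : finType) (e : rel T) (B : {set T}) : Prop :=
  zf_reach e B [set: T].

Definition minimal_zero_forcing_set (T : finType) (e : rel T) (B : {set T}) : Prop :=
  zero_forcing_set e B /\ forall B' : {set T}, B' \proper B -> ~ zero_forcing_set e B'.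

Definition Z_irrelevant (T : finType) (e : rel T) (v : T) : Prop :=
  forall B : {set T}, minimal_zero_forcing_set e B -> v \notin B.

Definition fort (T : finType) (e : rel T) (F : {set T}) : Prop :=
  F != set0 /\ forall v, v \notin F -> #|nbhd e v :&: F| != 1.

Definition minimal_fort (T : finType) (e : rel T) (F : {set T}) : Prop :=
  fort e F /\ forall F' : {set T}, F' \proper F -> ~ fort e F'.

(* Watching which vertices can never turn blue gives the standard duality: a
   fort disjoint from B stays white forever, while a forcing process that
   stalls at S <> V leaves the fort V \ S untouched; so B is zero forcing iff
   it meets every fort.  If v lies in a minimal fort F, then (V \ F) + v meets
   every fort, and any minimal zero forcing set inside it meets F only in v.
   If v lies in a minimal zero forcing set B, then B - v misses some fort and
   hence some minimal fort F, which B must meet, necessarily in v. *)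

From Stdlib Require Import ClassicalEpsilon.
From mathcomp Require Import all_boot.

Set Implicit Arguments.
Unset Strict Implicit.
Unset Printing Implicit Defensive.

(* minset and maxset need boolean predicates, whereas zero forcing is an
   inductive Prop. *)
Definition decide (P : Prop) : bool :=
  if excluded_middle_informative P then true else false.

Lemma decideP (P : Prop) : reflect P (decide P).
Proof. by rewrite /decide; case: excluded_middle_informative => h; constructor. Qed.

Section MinimalMaximal.
Variable T : finType.
Implicit Types (P : {set T} -> Prop) (A : {set T}).

Lemma exists_minimal P A : P A ->
  exists2 B : {set T}, B \subset A & P B /\ forall B' : {set T}, B' \proper B -> ~ P B'.
Proof.
move=> /decideP PA; pose p B := decide (P B).
have [B /minsetP[/decideP PB minB] sBA] := @minset_exists _ p A PA.
exists B => //; split => // B' ltB'B /decideP PB'.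
have eqB'B := minB B' PB' (proper_sub ltB'B).
by move: ltB'B; rewrite eqB'B properxx.
Qed.

Lemma exists_maximal P A : P A ->
  exists2 B : {set T}, A \subset B &
    P B /\ forall B' : {set T}, P B' -> B \subset B' -> B' = B.
Proof.
move=> /decideP PA; pose p B := decide (P B).
have [B /maxsetP[/decideP PB maxB] sAB] := @maxset_exists _ p A PA.
by exists B => //; split => // B' /decideP; apply: maxB.
Qed.

End MinimalMaximal.

Section ZeroForcingForts.
Variables (T : finType) (e : rel T).
Implicit Types (B F S : {set T}) (u w : T).

Lemma forces_disjoint_fort S F u w :
  fort e F -> [disjoint S & F] -> forces e S u w -> w \notin F.
Proof.
move=> [_ fortF] disSF /and3P[uS _ /eqP whiteN]; apply/negP => wF.
have uF : u \notin F by rewrite (disjointFr disSF uS).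
have NuF : nbhd e u :&: F = [set w].
  have wN : w \in nbhd e u by move: (set11 w); rewrite -whiteN inE => /andP[].
  apply/eqP; rewrite eqEsubset sub1set inE wN wF andbT -whiteN setDE.
  by rewrite setIS // -disjoints_subset disjoint_sym.
by move: (fortF u uF); rewrite NuF cards1.
Qed.

Lemma zf_reach_disjoint_fort B F S :
  fort e F -> [disjoint B & F] -> zf_reach e B S -> [disjoint S & F].
Proof.
move=> fortF disBF; elim=> // {}S u w _ disSF forcing.
rewrite disjoints_subset subUset sub1set inE -disjoints_subset disSF andbT.
exact: forces_disjoint_fort fortF disSF forcing.
Qed.

Lemma zero_forcing_set_meets_fort B F :
  zero_forcing_set e B -> fort e F -> ~~ [disjoint B & F].
Proof.
move=> zfB fortF; apply/negP => disBF.
have := zf_reach_disjoint_fort fortF disBF zfB.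
case: fortF => /set0Pn[x xF] _; rewrite disjoint_sym => /disjointFr/(_ xF).
by rewrite inE.
Qed.

Lemma stalled_setC_fort S :
  (forall u w, ~~ forces e S u w) -> S != setT -> fort e (~: S).
Proof.
move=> stalled SnT; split; first by rewrite -setCT (inj_eq (can_inj setCK)).
move=> u; rewrite inE negbK => uS; apply/negP => /cards1P[w NuSC].
have := stalled u w; rewrite /forces uS setDE NuSC eqxx andbT /=.
by move: (set11 w); rewrite -NuSC !inE => /andP[_ ->].
Qed.

Lemma zf_reach_stalled B :
  exists2 S : {set T}, B \subset S & zf_reach e B S /\ forall u w, ~~ forces e S u w.
Proof.
have [S sBS [reachS maxS]] := exists_maximal (zf_start e B).
exists S => //; split => // u w; apply/negP => forcing.
have wS : w \notin S by case/and3P: forcing.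
have := maxS _ (zf_step reachS forcing) (subsetUr _ _).
by move/setP/(_ w); rewrite !inE eqxx (negbTE wS).
Qed.

Lemma zero_forcing_or_disjoint_fort B :
  zero_forcing_set e B \/ exists2 F, fort e F & [disjoint B & F].
Proof.
have [S sBS [reachS stalled]] := zf_reach_stalled B.
have [/eqP ST|SnT] := boolP (S == setT); first by left; rewrite /zero_forcing_set -ST.
by right; exists (~: S); [apply: stalled_setC_fort | rewrite disjoints_subset setCK].
Qed.

Lemma zero_forcing_setP B :
  zero_forcing_set e B <-> forall F, fort e F -> ~~ [disjoint B & F].
Proof.
split=> [zfB F|meets]; first exact: zero_forcing_set_meets_fort.
have [// | [F fortF disBF]] := zero_forcing_or_disjoint_fort B.
by move: (meets F fortF); rewrite disBF.
Qed.

Lemma minimal_fort_setU1C_zero_forcing F v :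
  minimal_fort e F -> v \in F -> zero_forcing_set e (v |: ~: F).
Proof.
move=> [_ minF] vF; apply/zero_forcing_setP => F' fortF'.
rewrite -setI_eq0; apply/set0Pn.
have [sF'F | /subsetPn[x xF' xF]] := boolP (F' \subset F); last first.
  by exists x; rewrite !inE xF' xF orbT.
have eqF'F : F' = F.
  apply/eqP; rewrite eqEproper sF'F; apply/negP => ltF'F.
  exact: minF _ ltF'F fortF'.
by exists v; rewrite eqF'F !inE eqxx vF.
Qed.

End ZeroForcingForts.

Theorem proposition1p6 (T : finType) (e : rel T) (v : T) :
  simple_graph e ->
  Z_irrelevant e v <-> (forall F : {set T}, minimal_fort e F -> v \notin F).
Proof.
move=> _; split=> [irrelevant F minF | avoids B [zfB minB]]; apply/negP.
  move=> vF; have zf_vF := minimal_fort_setU1C_zero_forcing minF vF.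
  have [B sB [zfB minB]] := exists_minimal zf_vF.
  have := zero_forcing_set_meets_fort zfB minF.1.
  rewrite -setI_eq0 => /set0Pn[x /setIP[xB xF]].
  have := subsetP sB x xB; rewrite !inE xF orbF => /eqP eq_xv.
  by move: (irrelevant B (conj zfB minB)); rewrite -eq_xv xB.
move=> vB; have [/(minB _ (properD1 vB))[] | [F' fortF' disF']] :=
  zero_forcing_or_disjoint_fort e (B :\ v).
have [F sFF' [fortF minF]] := exists_minimal fortF'.
have := zero_forcing_set_meets_fort zfB fortF.
rewrite -setI_eq0 => /set0Pn[x /setIP[xB xF]].
have eq_xv : x = v.
  apply/eqP; apply: contraTT (subsetP sFF' x xF) => xnv.
  by rewrite (disjointFr disF') // !inE xnv.
by move: (avoids F (conj fortF minF)); rewrite -eq_xv xF.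
Qed.
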